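(* Let $p\geq 6$ be even and $q\geq 5$. Label the vertices of $C_p\,\square\, C_q$ as $\omega_{i,j}$ ($i\in\{1,\dots,p\}$, $j\in\{1,\dots,q\}$), where $\omega_{i,j}\omega_{i',j'}$ is an edge iff either $i=i'$ and $j'\equiv j\pm1 \pmod q$, or $j=j'$ and $i'\equiv i\pm 1\pmod p$. Let $M$ be any perfect matching of $C_p\,\square\, C_q$ containing the edges $\omega_{i,1}\omega_{i+1,1}$ and $\omega_{i,6}\omega_{i+1,6}$ for every even $i\in\{1,\dots,p\}$, the edges $\omega_{i,2}\omega_{i+1,2}$ and $\omega_{i,5}\omega_{i+1,5}$ for every odd $i\in\{1,\dots,p\}$, and the edges $\omega_{i,3}\omega_{i,4}$ for every $i\in\{1,\dots,p\}$ (indices $i$ taken modulo $p$, and the second index $6$ read as $1$ when $q=5$). Such a perfect matching exists, and $M$ cannot be extended to a Hamiltonian cycle. In particular, $C_p\,\square\, C_q$ does not have the PMH--property.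
   Context: $C_n$ denotes the cycle on $n$ vertices and $C_p\,\square\, C_q$ the Cartesian product of two cycles. A perfect matching $M$ of a graph $G$ can be extended to a Hamiltonian cycle if there exists a perfect matching $N$ of $G$ such that $M\cup N$ is (the edge set of) a Hamiltonian cycle of $G$. A graph has the PMH--property if it admits at least one perfect matching and every perfect matching of it can be extended to a Hamiltonian cycle. *)

From mathcomp Require Import all_boot.
Set Implicit Arguments. Unset Strict Implicit. Unset Printing Implicit Defensive.

Section Graph.
Variables (T : finType) (e : rel T).

Definition edge_set : {set {set T}} :=
  [set [set x; y] | x in T, y in T & e x y].

Definition perfect_matching (M : {set {set T}}) : Prop :=
  M \subset edge_set /\ forall x : T, #|[set m in M | x \in m]| = 1.

Definition hamiltonian_cycle (c : seq T) : bool :=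
  [&& uniq c, size c == #|T|, 2 < size c & cycle e c].

Definition cycle_edges (c : seq T) : {set {set T}} :=
  [set [set xy.1; xy.2] | xy in zip c (rot 1 c)].

Definition extendable_to_ham (M : {set {set T}}) : Prop :=
  exists N, perfect_matching N /\
    exists c, hamiltonian_cycle c /\ M :|: N = cycle_edges c.

Definition PMH_property : Prop :=
  (exists M, perfect_matching M) /\
  forall M, perfect_matching M -> extendable_to_ham M.
End Graph.

(* C_p [] C_q : vertex (a, b) : 'I_p * 'I_q stands for the paper's
   omega_{a+1, b+1}. *)
Definition torus_adj (p q : nat) : rel ('I_p * 'I_q) := fun u v =>
  ((u.1 == v.1) && ((val v.2 == (u.2 + 1) %% q) || (val u.2 == (v.2 + 1) %% q)))
  || ((u.2 == v.2) && ((val v.1 == (u.1 + 1) %% p) || (val u.1 == (v.1 + 1) %% p))).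

(* The matching condition of the theorem, translated to 0-based indices:
   paper row i even  <-> a = i-1 odd; paper columns 1,2,3,4,5,6 <-> 0,1,2,3,4,(5 mod q). *)
Definition special_matching_cond (p q : nat) (M : {set {set ('I_p * 'I_q)}}) : Prop :=
  (forall (a a' : 'I_p) (j : 'I_q), val a' = (a + 1) %% p ->
     (odd a && ((val j == 0) || (val j == 5 %% q))) || (~~ odd a && ((val j == 1) || (val j == 4))) ->
     [set (a, j); (a', j)] \in M)
  /\
  (forall (a : 'I_p) (j j' : 'I_q), val j = 2 -> val j' = 3 -> [set (a, j); (a, j')] \in M).
Arguments special_matching_cond : clear implicits.
Arguments torus_adj : clear implicits.

From mathcomp Require Import all_boot zify.
Set Implicit Arguments. Unset Strict Implicit. Unset Printing Implicit Defensive.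

(* Let M be a perfect matching of C_p [] C_q with the prescribed edges, and
   suppose a perfect matching N completes it to a Hamiltonian cycle; write
   m and n for the partner maps of M and N.  Layers 2 and 3 (the ladder)
   are joined by vertical M-edges; on either side lies a band of two layers
   (1, 0 above, 4, 5 below) whose M-edges are horizontal, in alternating
   positions.  Following the cycle two edges at a time (the map m \o n)
   from the ladder, a local analysis shows that a walk entering a band moves
   monotonically along its inner layer, detours through the outer layer only
   along M-edges whose two ends both go back vertically in N, and returns to
   the ladder.  As the cycle is connected, every M-edge has an end on this
   trail.  Consequently the M-edges of layer 0 are left vertically in the same
   direction by both ends (downwards unless q = 5), and horizontal N-edges of
   the ladder start at odd rows.  Then layer 1, the downward vertices of
   layer 0 and the ladder rows whose layer-0 vertex goes up form a set closed
   under m and n which misses layer 4: a contradiction. *)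

Lemma involutive_sym (T : Type) (f : T -> T) : involutive f -> forall a b, f a = b -> f b = a.
Proof. by move=> fK a b <-; rewrite fK. Qed.

Section PerfectMatchings.
Variables (T : finType) (e : rel T).

Lemma involution_perfect_matching (f : T -> T) :
  involutive f -> (forall x, e x (f x)) ->
  perfect_matching e [set [set x; f x] | x : T].
Proof.
move=> fK e_f; split.
  by apply/subsetP=> E /imsetP [x _ ->]; apply/imset2P; exists x (f x); rewrite ?inE ?e_f.
move=> x; apply/eqP/cards1P; exists [set x; f x]; apply/setP=> E.
rewrite !inE; apply/andP/eqP=> [[/imsetP [y _ ->]]|->].
  by rewrite !inE => /orP [] /eqP ->; rewrite ?fK // setUC.
by split; [apply/imsetP; exists x|rewrite !inE eqxx].
Qed.

Hypothesis e_irr : irreflexive e.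
Variable M : {set {set T}}.
Hypothesis M_pm : perfect_matching e M.

Lemma pm_edge_at x : exists E, [set E' in M | x \in E'] = [set E].
Proof. by case: M_pm => _ /(_ x) /eqP /cards1P. Qed.

Lemma pm_uniq x y z : [set x; y] \in M -> [set x; z] \in M -> y = z.
Proof.
move=> xyM xzM; have [E HE] := pm_edge_at x.
have: [set x; y] \in [set E' in M | x \in E'] by rewrite inE xyM !inE eqxx.
have: [set x; z] \in [set E' in M | x \in E'] by rewrite inE xzM !inE eqxx.
rewrite HE !inE => /eqP <- /eqP eq_xy_xz.
have: y \in [set x; z] by rewrite -eq_xy_xz !inE eqxx orbT.
have: z \in [set x; y] by rewrite eq_xy_xz !inE eqxx orbT.
by rewrite !inE => /orP [] /eqP -> // /orP [] /eqP.
Qed.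

Lemma pm_edge x : exists y, [set x; y] \in M.
Proof.
have [E HE] := pm_edge_at x.
have: E \in [set E' in M | x \in E'] by rewrite HE set11.
rewrite inE => /andP [EM xE]; case: M_pm => /subsetP /(_ E EM) /imset2P [u v _ _ Euv] _.
move: xE; rewrite Euv !inE => /orP [] /eqP xE.
  by exists v; rewrite xE -Euv.
by exists u; rewrite setUC xE -Euv.
Qed.

Definition mate x := odflt x [pick y | [set x; y] \in M].

Lemma mate_in x : [set x; mate x] \in M.
Proof.
rewrite /mate; case: pickP => [y //|/= noM].
by case: (pm_edge x) => y; rewrite (noM y).
Qed.

Lemma mate_eq x y : [set x; y] \in M -> mate x = y.
Proof. exact: pm_uniq (mate_in x). Qed.

Lemma mateK : involutive mate.
Proof. by move=> x; apply: mate_eq; rewrite setUC mate_in. Qed.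

(* Partners are adjacent (in one direction or the other, as e need not be
   symmetric). *)
Lemma mate_adj x : e x (mate x) || e (mate x) x.
Proof.
case: M_pm => /subsetP /(_ _ (mate_in x)) /imset2P [u v _].
rewrite inE => /andP [_ euv] Euv _.
have: x \in [set u; v] by rewrite -Euv !inE eqxx.
have: mate x \in [set u; v] by rewrite -Euv !inE eqxx orbT.
rewrite !inE => /orP [] /eqP mx /orP [] /eqP xu; rewrite mx xu ?euv ?orbT //.
- by move/setP: Euv => /(_ v); rewrite mx xu !inE eqxx orbT orbb => /eqP vu;
    move: euv; rewrite vu e_irr.
- by move/setP: Euv => /(_ u); rewrite mx xu !inE eqxx orbb => /eqP uv;
    move: euv; rewrite uv e_irr.
Qed.
End PerfectMatchings.

Lemma consecutive_iff (T : eqType) (X : T -> Prop) x s :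
  (forall a b, (a, b) \in zip (x :: s) s -> X a <-> X b) ->
  forall y, y \in x :: s -> X y <-> X x.
Proof.
elim: s x => [|z s IHs] x Xab y; first by rewrite inE => /eqP ->.
rewrite inE => /orP [/eqP -> //|ys].
have Xxz : X x <-> X z by apply: Xab; rewrite /= inE eqxx.
have /(_ y ys) Xyz : forall y, y \in z :: s -> X y <-> X z.
  by apply: IHs => a b ab; apply: Xab; rewrite /= inE ab orbT.
by split=> [/Xyz/Xxz|/Xxz/Xyz].
Qed.

Lemma zip_rcons_subset (T : eqType) (s : seq T) x z ab :
  ab \in zip (x :: s) s -> ab \in zip (x :: s) (rcons s z).
Proof.
elim: s x => [//|y s IHs] x /=.
by rewrite !inE => /orP [-> //|ab_s]; rewrite IHs ?orbT.
Qed.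

Section HamiltonianCycles.
Variables (T : finType) (e : rel T).
Variables (M N : {set {set T}}) (c : seq T).
Hypotheses (M_pm : perfect_matching e M) (N_pm : perfect_matching e N).
Hypotheses (c_ham : hamiltonian_cycle e c) (MN_c : M :|: N = cycle_edges c).

Lemma ham_mem x : x \in c.
Proof.
case/and4P: c_ham => c_uniq /eqP c_size _ _.
have /subset_cardP : #|c| = #|T| by rewrite (card_uniqP c_uniq) c_size.
by rewrite subset_predT => /(_ isT) /(_ x); rewrite inE => ->.
Qed.

Lemma ham_closed (X : T -> Prop) :
  (forall x, X x -> X (mate M x)) -> (forall x, X x -> X (mate N x)) ->
  forall x0 x, X x0 -> X x.
Proof.
move=> XM XN.
have stable (P : {set {set T}}) : perfect_matching e P ->
    (forall x, X x -> X (mate P x)) -> forall a b, [set a; b] \in P -> X a <-> X b.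
  move=> P_pm XP a b abP; rewrite -(mate_eq P_pm abP).
  by split=> [/XP //|/XP]; rewrite (mateK P_pm).
case/and4P: c_ham => _ _ c_gt2 _.
case: c c_gt2 MN_c ham_mem => [//|h s] _ MN_hs hs_mem.
have Xab a b : (a, b) \in zip (h :: s) s -> X a <-> X b.
  move=> /(zip_rcons_subset h) ab.
  have: [set a; b] \in cycle_edges (h :: s).
    by apply/imsetP; exists (a, b); rewrite // rot1_cons.
  by rewrite -MN_hs inE => /orP [] /stable; [apply|apply].
move=> x0 x X0; apply/(consecutive_iff Xab (hs_mem x)).
exact/(consecutive_iff Xab (hs_mem x0)).
Qed.

(* The two matchings are disjoint: otherwise {x, mate x} would be a
   component of the cycle, which has more than two vertices. *)
Lemma ham_mate_neq x : mate M x <> mate N x.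
Proof.
move=> eqMN; pose X y := y = x \/ y = mate M x.
have Xall y : X y.
  apply: (@ham_closed X _ _ x); last by left.
    by move=> z [->|->]; [right|left; rewrite (mateK M_pm)].
  by move=> z [->|->]; [right; rewrite eqMN|left; rewrite eqMN (mateK N_pm)].
case/and4P: c_ham => _ /eqP c_size c_gt2 _.
have: [set: T] \subset [set x; mate M x].
  by apply/subsetP=> y _; rewrite !inE; case: (Xall y) => ->; rewrite eqxx ?orbT.
move/subset_leq_card; rewrite cardsT -c_size cards2.
by rewrite leqNgt (leq_ltn_trans _ c_gt2) // ltnS leq_b1.
Qed.
End HamiltonianCycles.

(* Two involutions m and n generating a connected structure: a nonempty set
   stable under the permutation m \o n meets every pair {x, m x}.  Indeed the
   set is then also stable under the inverse n \o m, so its union with its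
   m-image is stable under m and n. *)
Section OrbitCover.
Variables (T : finType) (m n : T -> T).
Hypotheses (mK : involutive m) (nK : involutive n).
Hypothesis connected : forall X : T -> Prop,
  (forall x, X x -> X (m x)) -> (forall x, X x -> X (n x)) -> forall x0 x, X x0 -> X x.

Lemma orbit_cover (S : pred T) y0 :
  (forall y, S y -> S (m (n y))) -> S y0 -> forall x, S x || S (m x).
Proof.
move=> S_mn S_y0.
have mn_inj : injective (m \o n) by apply: inj_comp; apply: inv_inj.
have mn_onto : (m \o n) @: [set y | S y] = [set y | S y].
  apply/eqP; rewrite eqEcard (card_imset _ mn_inj) leqnn andbT.
  by apply/subsetP=> z /imsetP [y]; rewrite !inE => Sy ->; apply: S_mn.
have S_nm y : S y -> S (n (m y)).
  move=> Sy; have: y \in (m \o n) @: [set y | S y] by rewrite mn_onto inE.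
  by case/imsetP=> z; rewrite inE /= => Sz ->; rewrite mK nK.
move=> x; apply: (@connected (fun x => S x || S (m x)) _ _ y0); last by rewrite S_y0.
  by move=> z /orP [] Sz; rewrite mK Sz ?orbT.
by move=> z /orP [] Sz; [rewrite S_mn ?orbT|move: (S_nm _ Sz); rewrite mK => ->].
Qed.
End OrbitCover.

(* A band abstracts one side of the ladder of vertical
   M-edges of the torus: the ladder layer, the adjacent inner layer and the
   outer layer beyond it; the inner and outer layers carry horizontal M-edges
   in alternating positions.  R/L are the horizontal shifts in the direction
   of the walk, U moves away from the ladder and D towards it; m and n are
   the two matchings of a Hamiltonian cycle.  Choosing the roles of the
   shifts of the torus in the four possible ways gives the four symmetric
   instances used below. *)
Section BandWalk.
Variable V : finType.

Record band (m n R L U D : V -> V) (par outer inner ladder : pred V) : Prop :=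
  Band {
  band_RK : cancel R L;
  band_LK : cancel L R;
  band_UK : cancel U D;
  band_DK : cancel D U;
  band_DR : forall x, D (R x) = R (D x);
  band_UR : forall x, U (R x) = R (U x);
  band_DR_neq : forall x, D x <> R x;
  band_UR_neq : forall x, U x <> R x;
  band_UD_neq : forall x, U x <> D x;
  band_RR_neq : forall x, R (R x) <> x;
  band_parR : forall x, par (R x) = ~~ par x;
  band_parU : forall x, par (U x) = par x;
  band_parD : forall x, par (D x) = par x;
  band_outerR : forall x, outer x -> outer (R x);
  band_innerR : forall x, inner x -> inner (R x);
  band_outerD : forall x, outer x -> inner (D x);
  band_innerU : forall x, inner x -> outer (U x);
  band_innerD : forall x, inner x -> ladder (D x);
  band_ladderU : forall x, ladder x -> inner (U x);
  band_outer_inner : forall x, outer x -> ~~ inner x;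
  band_m_outer : forall x, outer x -> m x = if par x then R x else L x;
  band_m_inner : forall x, inner x -> m x = if par x then L x else R x;
  band_m_ladder : forall x, ladder x -> m x = D x;
  band_nK : involutive n;
  band_mn : forall x, m x <> n x;
  band_n_shift : forall x, [\/ n x = R x, n x = L x, n x = U x | n x = D x]
}.

Variables (m n R L U D : V -> V) (par outer inner ladder : pred V).
Hypothesis B : band m n R L U D par outer inner ladder.

Let RK := band_RK B.
Let LK := band_LK B.
Let UK := band_UK B.
Let DK := band_DK B.
Let DR := band_DR B.
Let UR := band_UR B.
Unset Implicit Arguments.
Let DR_neq x : D x <> R x := band_DR_neq B (x := x).
Let UR_neq x : U x <> R x := band_UR_neq B (x := x).
Let UD_neq x : U x <> D x := band_UD_neq B (x := x).
Let RR_neq x : R (R x) <> x := band_RR_neq B (x := x).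
Let mn x : m x <> n x := band_mn B (x := x).
Set Implicit Arguments.
Let parR := band_parR B.
Let parU := band_parU B.
Let parD := band_parD B.
Let outerR := band_outerR B.
Let innerR := band_innerR B.
Let outerD := band_outerD B.
Let innerU := band_innerU B.
Let innerD := band_innerD B.
Let ladderU := band_ladderU B.
Let outer_inner := band_outer_inner B.
Let m_outer := band_m_outer B.
Let m_inner := band_m_inner B.
Let m_ladder := band_m_ladder B.
Let nK := band_nK B.
Let n_shift := band_n_shift B.

Let n_sym := involutive_sym nK.

(* The walk has just moved along M from the even inner vertex L y to y, and
   the ladder vertex below L y is not joined in N to its right neighbour. *)
Definition inner_state y :=
  [&& inner (L y), ~~ par (L y) & n (D (L y)) != R (D (L y))].

(* The walk has made a detour through the outer layer: it went up from L y,
   along the M-edge {L y, y} and goes down from y; moreover the ladder vertex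
   two steps below y is not joined in N to its right neighbour. *)
Definition outer_state y :=
  [&& outer y, ~~ par y, n y == D y, n (L y) == D (L y)
    & n (D (D y)) != R (D (D y))].

Definition band_state y := inner_state y || outer_state y.

(* If the walk leaves the inner vertex R w other than downwards, the ladder
   vertex below R w is forced to go right in N: going left or up contradicts
   the hypotheses, going down would follow its M-edge. *)
Lemma ladder_turns_right w : inner w -> n (D w) <> R (D w) ->
  n (R w) <> D (R w) -> n (D (R w)) = R (D (R w)).
Proof.
move=> Iw nDw nRw; case: (n_shift (D (R w))) => // [nL|nU|nD].
- by case: nDw; rewrite DR RK in nL; apply: n_sym.
- by case: nRw; rewrite DK in nU; apply: n_sym.
- by case: (mn (D (R w))); rewrite nD m_ladder // innerD // innerR.
Qed.

(* One double step of the walk from the inner vertex R w, reached through M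
   from w: the walk moves on to the right, detours through the outer layer,
   or returns to the ladder. *)
Lemma inner_step w : inner w -> ~~ par w -> n (D w) <> R (D w) ->
  band_state (m (n (R w))) \/ ladder (n (R w)).
Proof.
move=> Iw Pw nDw.
have IRw := innerR Iw; have IRRw := innerR IRw.
have PRw : par (R w) by rewrite parR Pw.
have PRRw : ~~ par (R (R w)) by rewrite parR PRw.
have mRRw : m (R (R w)) = R (R (R w)) by rewrite m_inner // (negbTE PRRw).
case: (n_shift (R w)) => nRw.
- have /ladder_turns_right turn : n (R w) <> D (R w).
    by rewrite nRw => /esym; apply: DR_neq.
  left; apply/orP; left; rewrite nRw mRRw /inner_state RK IRRw PRRw DR.
  by rewrite (n_sym (turn Iw nDw)); apply/eqP=> /esym; apply: RR_neq.
- by case: (mn (R w)); rewrite nRw m_inner // PRw.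
- have /ladder_turns_right turn : n (R w) <> D (R w) by rewrite nRw; apply: UD_neq.
  have {turn}nRDRw := n_sym (turn Iw nDw).
  set z := R (U (R w)).
  have OURw : outer (U (R w)) by apply: innerU.
  have Dz : D z = R (R w) by rewrite /z DR UK.
  have nRRw : n (R (R w)) = z.
    case: (n_shift (R (R w))) => // nRRw.
    + by case: (mn (R (R w))); rewrite nRRw mRRw.
    + by case: (UR_neq (R w)); rewrite RK in nRRw; rewrite -nRw; apply: n_sym.
    + by rewrite nRRw UR.
    + by case: (DR_neq (R w)); rewrite DR in nRRw; rewrite -nRDRw; apply: n_sym.
  left; apply/orP; right; rewrite nRw m_outer // parU PRw -/z.
  rewrite /outer_state outerR // /z parR parU PRw /= -/z Dz (n_sym nRRw) eqxx.
  rewrite /z RK UK (n_sym nRw) eqxx /= DR nRDRw.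
  by apply/eqP=> /esym; apply: RR_neq.
- by right; rewrite nRw innerD.
Qed.

Lemma band_step y : band_state y -> band_state (m (n y)) \/ ladder (n y).
Proof.
case/orP=> [/and3P [Iw Pw /eqP nDw]|/and5P [Oy Py /eqP nDy _ nDDy]].
  by have := inner_step Iw Pw nDw; rewrite LK.
have IDy := outerD Oy.
left; rewrite nDy m_inner // parD (negbTE Py).
by rewrite /band_state /inner_state RK IDy parD Py nDDy.
Qed.

Lemma band_entry y : ladder y -> ~~ par y -> n y = U y -> band_state (m (n y)).
Proof.
move=> Ly Py nUy; have IUy := ladderU Ly.
rewrite nUy m_inner // parU (negbTE Py); apply/orP; left.
by rewrite /inner_state RK IUy parU Py UK nUy; apply/eqP; apply: UR_neq.
Qed.

Lemma band_state_layer y : band_state y -> inner y || outer y.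
Proof.
by case/orP=> [/and3P [Iy _ _]|/and5P [-> _ _ _ _]]; rewrite ?orbT // -(LK y) innerR.
Qed.

Lemma band_state_inner y : band_state y -> inner y ->
  par y /\ n (D (L y)) <> R (D (L y)).
Proof.
case/orP=> [/and3P [_ PLy /eqP nDLy]|/and5P [Oy _ _ _ _]] Iy.
  by rewrite -(LK y) parR PLy LK.
by move: (outer_inner Oy); rewrite Iy.
Qed.

Lemma band_state_outer y : band_state y -> outer y -> n y = D y /\ n (m y) = D (m y).
Proof.
case/orP=> [/and3P [ILy _ _]|/and5P [_ Py /eqP nDy /eqP nDLy _]] Oy.
  by move: (outer_inner Oy); rewrite -(LK y) innerR.
by rewrite m_outer // (negbTE Py).
Qed.
End BandWalk.

Lemma addn_modn_neq a d k : a < k -> 0 < d < k -> (a + d) %% k != a.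
Proof.
move=> ltak /andP [d_gt0 ltdk]; apply/eqP=> ad_a.
have: a + d == a + 0 %[mod k] by rewrite addn0 ad_a modn_small.
by rewrite eqn_modDl mod0n modn_small // eqn0Ngt d_gt0.
Qed.

Lemma ordS_neq k (i : 'I_k) : 1 < k -> ordS i != i.
Proof.
by move=> k_gt1; rewrite -val_eqE /= -addn1 addn_modn_neq.
Qed.

Lemma ordSS_neq k (i : 'I_k) : 2 < k -> ordS (ordS i) != i.
Proof.
move=> k_gt2; rewrite -val_eqE /= -[(_ %% k).+1]addn1 modnDml addn1 -addn2.
exact: addn_modn_neq.
Qed.

(* The torus C_p [] C_q with vertices (a, j): a is the row, j the layer.
   cR/cL and cD/cU are the cyclic shifts of the row and of the layer, par is
   the parity of the row and lay k the layer k mod q. *)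
Section Torus.
Variables (p q : nat).
Hypotheses (p_ge6 : 6 <= p) (p_even : ~~ odd p) (q_ge5 : 5 <= q).
Local Notation V := ('I_p * 'I_q)%type.

Definition cR (x : V) : V := (ordS x.1, x.2).
Definition cL (x : V) : V := (ord_pred x.1, x.2).
Definition cD (x : V) : V := (x.1, ordS x.2).
Definition cU (x : V) : V := (x.1, ord_pred x.2).
Definition par (x : V) := odd x.1.
Definition lay k (x : V) := val x.2 == k %% q.

Lemma cRK : cancel cR cL. Proof. by case=> a j; rewrite /cL /= ordSK. Qed.
Lemma cLK : cancel cL cR. Proof. by case=> a j; rewrite /cR /= ord_predK. Qed.
Lemma cDK : cancel cD cU. Proof. by case=> a j; rewrite /cU /= ordSK. Qed.
Lemma cUK : cancel cU cD. Proof. by case=> a j; rewrite /cD /= ord_predK. Qed.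

Lemma parR x : par (cR x) = ~~ par x.
Proof. by rewrite /par /= odd_mod ?(negbTE p_even). Qed.

Lemma parL x : par (cL x) = ~~ par x.
Proof. by rewrite -{2}(cLK x) parR negbK. Qed.

Lemma rowS_neq (a : 'I_p) : ordS a != a.
Proof. by rewrite ordS_neq //; apply: leq_trans p_ge6. Qed.

Lemma cRR_neq x : cR (cR x) <> x.
Proof.
by apply/eqP; case: x => a j; rewrite xpair_eqE negb_and ordSS_neq //; apply: leq_trans p_ge6.
Qed.

Lemma cDD_neq x : cD (cD x) <> x.
Proof.
apply/eqP; case: x => a j; rewrite xpair_eqE negb_and ordSS_neq ?orbT //.
exact: leq_trans q_ge5.
Qed.

Lemma cR_row_neq x y : y.1 = x.1 -> y <> cR x.
Proof. by move=> yx /(congr1 fst) /= Ey; move: (rowS_neq x.1); rewrite -Ey yx eqxx. Qed.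

Lemma cL_row_neq x y : y.1 = x.1 -> y <> cL x.
Proof.
move=> yx /(congr1 cR); rewrite cLK => /(congr1 fst) /= Ex.
by move: (rowS_neq y.1); rewrite Ex yx eqxx.
Qed.

Lemma cLL_neq x : cL (cL x) <> x.
Proof. by move=> LLx; apply: (@cRR_neq x); rewrite -{1}LLx !cLK. Qed.

Lemma cUD_neq x : cU x <> cD x.
Proof. by move=> UD; apply: (@cDD_neq (cU x)); rewrite cUK UD. Qed.

Lemma torus_adjE u v :
  torus_adj p q u v = [|| v == cD u, u == cD v, v == cR u | u == cR v].
Proof.
case: u v => [a j] [b k]; rewrite /torus_adj /cD /cR !xpair_eqE -!val_eqE /= !addn1.
rewrite !andb_orr -!orbA (eq_sym (nat_of_ord b) a) (eq_sym (nat_of_ord k) j).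
by rewrite !(andbC (nat_of_ord j == k)).
Qed.

Lemma torus_adj_sym : symmetric (torus_adj p q).
Proof. by move=> x y; rewrite !torus_adjE orbCA (orbC (y == cR x)). Qed.

Lemma adj_shift x y : torus_adj p q x y ->
  [\/ y = cR x, y = cL x, y = cU x | y = cD x].
Proof.
rewrite torus_adjE => /or4P [] /eqP E.
- exact: Or44.
- by apply: Or43; rewrite E cDK.
- exact: Or41.
- by apply: Or42; rewrite E cRK.
Qed.

Lemma small_mod k : k < 5 -> k %% q = k.
Proof. by move=> k_lt5; rewrite modn_small //; apply: leq_trans q_ge5. Qed.

Lemma layE k x : k < 5 -> lay k x = (val x.2 == k).
Proof. by move=> k_lt5; rewrite /lay small_mod. Qed.

Lemma layD k x : lay k x -> lay k.+1 (cD x).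
Proof. by rewrite /lay /= => /eqP ->; rewrite -addn1 modnDml addn1. Qed.

Lemma layU k x : lay k.+1 x -> lay k (cU x).
Proof.
rewrite -{1}(cUK x); move: (cU x) => y.
by rewrite /lay /= -addn1 -[k.+1]addn1 eqn_modDr modn_small.
Qed.

Lemma cD_neq x : cD x <> x.
Proof.
apply/eqP; case: x => a j; rewrite xpair_eqE negb_and ordS_neq ?orbT //.
exact: leq_trans q_ge5.
Qed.

Lemma adj_irr : irreflexive (torus_adj p q).
Proof.
move=> x; apply/negP; rewrite torus_adjE => /or4P [] /eqP E.
- by apply: (@cD_neq x); rewrite -E.
- by apply: (@cD_neq x); rewrite -E.
- exact: (@cR_row_neq x x).
- exact: (@cR_row_neq x x).
Qed.

(* The four orientations of a band: r chooses the horizontal direction of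
   the walk, u whether the band lies above the ladder (layers 2, 1, 0) or
   below it (layers 3, 4, 5).  band_lay u k is the k-th layer of the band,
   counted from the outer layer k = 0 to the ladder k = 2. *)
Definition hshift (r : bool) : V -> V := if r then cR else cL.
Definition vshift (u : bool) : V -> V := if u then cU else cD.
Definition rpar (r : bool) (x : V) := if r then par x else ~~ par x.
Definition band_lay (u : bool) k : pred V := lay (if u then k else 5 - k).

Lemma hshiftK r : cancel (hshift r) (hshift (~~ r)).
Proof. by case: r; [exact: cRK|exact: cLK]. Qed.
Lemma hshiftVK r : cancel (hshift (~~ r)) (hshift r).
Proof. by case: r; [exact: cLK|exact: cRK]. Qed.
Lemma vshiftK u : cancel (vshift u) (vshift (~~ u)).
Proof. by case: u; [exact: cUK|exact: cDK]. Qed.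
Lemma vshiftVK u : cancel (vshift (~~ u)) (vshift u).
Proof. by case: u; [exact: cDK|exact: cUK]. Qed.

Lemma hv_comm r u x : vshift u (hshift r x) = hshift r (vshift u x).
Proof. by case: r; case: u. Qed.

Lemma vh_neq r u x : vshift u x <> hshift r x.
Proof. by case: r; [apply: cR_row_neq|apply: cL_row_neq]; case: u. Qed.

Lemma vv_neq u x : vshift u x <> vshift (~~ u) x.
Proof. by case: u => [|/esym]; apply: cUD_neq. Qed.

Lemma hh_neq r x : hshift r (hshift r x) <> x.
Proof. by case: r; [apply: cRR_neq|apply: cLL_neq]. Qed.

Lemma rpar_h r x : rpar r (hshift r x) = ~~ rpar r x.
Proof. by case: r; rewrite /rpar /= ?parR ?parL. Qed.

Lemma rpar_v r u x : rpar r (vshift u x) = rpar r x.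
Proof. by case: r; case: u. Qed.

Lemma band_lay_h u k r x : band_lay u k (hshift r x) = band_lay u k x.
Proof. by case: r. Qed.

Lemma band_lay_up u k x : band_lay u k.+1 x -> k < 5 -> band_lay u k (vshift u x).
Proof.
case: u => Lx k_lt5; move: Lx; first exact: layU.
by rewrite /band_lay /= subSS (@subSn k 4 k_lt5); apply: layD.
Qed.

Lemma band_lay_down u k x : band_lay u k x -> k < 5 -> band_lay u k.+1 (vshift (~~ u) x).
Proof.
case: u => Lx k_lt5; move: Lx; first exact: layD.
by rewrite /band_lay /= subSS (@subSn k 4 k_lt5); apply: layU.
Qed.

Lemma band_lay_eq u u' k k' x : band_lay u k x -> band_lay u' k' x ->
  k < 3 -> k' < 3 -> k = k' /\ (u = u' \/ k = 0 /\ q = 5).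
Proof.
rewrite /band_lay /lay => /eqP -> /eqP Lx' k_lt3 k'_lt3; move: Lx'.
have [->|q_neq5] := eqVneq q 5.
  by case: u u' k k' k_lt3 k'_lt3 => [] [] [|[|[|//]]] [|[|[|//]]] //= _ _; auto.
have q_gt5 : 5 < q by rewrite ltn_neqAle eq_sym q_neq5.
by case: u u' => [] [] /=; rewrite !modn_small //; lia.
Qed.

Lemma ladder_cross u x : band_lay u 2 x -> band_lay (~~ u) 2 (vshift (~~ u) x).
Proof. by case: u; [apply: (@layD 2)|apply: (@layU 2)]. Qed.

Section Completion.
Variables (M N : {set {set V}}) (c : seq V).
Hypotheses (M_pm : perfect_matching (torus_adj p q) M)
           (N_pm : perfect_matching (torus_adj p q) N).
Hypotheses (c_ham : hamiltonian_cycle (torus_adj p q) c)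
           (MN_c : M :|: N = cycle_edges c).
Hypothesis M_special : special_matching_cond p q M.

Local Notation m := (mate M).
Local Notation n := (mate N).

Lemma mK : involutive m. Proof. exact: mateK M_pm. Qed.
Lemma nK : involutive n. Proof. exact: mateK N_pm. Qed.
Lemma m_neq_n x : m x <> n x. Proof. exact: (ham_mate_neq M_pm N_pm c_ham MN_c (x := x)). Qed.

Lemma connected (X : V -> Prop) :
  (forall x, X x -> X (m x)) -> (forall x, X x -> X (n x)) -> forall x0 x, X x0 -> X x.
Proof. exact: (ham_closed M_pm N_pm c_ham MN_c (X := X)). Qed.

Lemma n_shift x : [\/ n x = cR x, n x = cL x, n x = cU x | n x = cD x].
Proof.
by apply: adj_shift; move: (mate_adj adj_irr N_pm x); rewrite torus_adj_sym orbb.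
Qed.

Lemma m_right x :
  (par x && (lay 0 x || lay 5 x)) || (~~ par x && (lay 1 x || lay 4 x)) -> m x = cR x.
Proof.
move=> Hx; apply: (mate_eq M_pm); case: M_special => right_edges _.
case: x Hx => a j Hx; apply: right_edges; first by rewrite /= addn1.
by move: Hx; rewrite /par /lay mod0n (@small_mod 1) // (@small_mod 4).
Qed.

Lemma m_outer_lay x : lay 0 x || lay 5 x -> m x = if par x then cR x else cL x.
Proof.
move=> Lx; case Px: (par x); first by apply: m_right; rewrite Px Lx.
have mLx : m (cL x) = x by rewrite m_right ?cLK // parL Px Lx.
by rewrite -{1}mLx mK.
Qed.

Lemma m_inner_lay x : lay 1 x || lay 4 x -> m x = if par x then cL x else cR x.
Proof.
move=> Lx; case Px: (par x); last by apply: m_right; rewrite Px Lx orbT.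
have mLx : m (cL x) = x by rewrite m_right ?cLK // parL Px Lx orbT.
by rewrite -{1}mLx mK.
Qed.

Lemma m_lay2 x : lay 2 x -> m x = cD x.
Proof.
move=> Lx; apply: (mate_eq M_pm); case: M_special => _ ladder_edges.
by case: x Lx => a j; rewrite layE // => /eqP j2; apply: ladder_edges => //=; rewrite j2 small_mod.
Qed.

Lemma m_lay3 x : lay 3 x -> m x = cU x.
Proof. by move=> /(@layU 2) /m_lay2; rewrite cUK => mUx; rewrite -{1}mUx mK. Qed.

Let n_sym := involutive_sym nK.

Lemma band_lay_outer u x : band_lay u 0 x -> lay 0 x || lay 5 x.
Proof. by case: u => Lx; apply/orP; [left|right]. Qed.

Lemma band_lay_inner u x : band_lay u 1 x -> lay 1 x || lay 4 x.
Proof. by case: u => Lx; apply/orP; [left|right]. Qed.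

Lemma m_outer r u x : band_lay u 0 x ->
  m x = if rpar r x then hshift r x else hshift (~~ r) x.
Proof. by move/band_lay_outer/m_outer_lay ->; case: r; rewrite /rpar /=; case: (par x). Qed.

Lemma m_inner r u x : band_lay u 1 x ->
  m x = if rpar r x then hshift (~~ r) x else hshift r x.
Proof. by move/band_lay_inner/m_inner_lay ->; case: r; rewrite /rpar /=; case: (par x). Qed.

Lemma m_ladder u x : band_lay u 2 x -> m x = vshift (~~ u) x.
Proof. by case: u; [apply: m_lay2|apply: m_lay3]. Qed.

Lemma m_band_lay u k x : band_lay u k x -> k < 2 -> band_lay u k (m x).
Proof.
case: k => [|[|//]] Lx _; [rewrite (m_outer true Lx)|rewrite (m_inner true Lx)];
  by case: ifP; rewrite band_lay_h.
Qed.

Lemma n_band r u x :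
  [\/ n x = hshift r x, n x = hshift (~~ r) x, n x = vshift u x | n x = vshift (~~ u) x].
Proof.
case: r; case: u; case: (n_shift x) => ->;
  by [apply: Or41|apply: Or42|apply: Or43|apply: Or44].
Qed.

Lemma torus_band r u : band m n (hshift r) (hshift (~~ r)) (vshift u) (vshift (~~ u))
  (rpar r) (band_lay u 0) (band_lay u 1) (band_lay u 2).
Proof.
split.
- exact: hshiftK.
- exact: hshiftVK.
- exact: vshiftK.
- exact: vshiftVK.
- exact: hv_comm.
- exact: hv_comm.
- by move=> x; apply: vh_neq.
- by move=> x; apply: vh_neq.
- by move=> x; apply: vv_neq.
- by move=> x; apply: hh_neq.
- exact: rpar_h.
- exact: rpar_v.
- exact: rpar_v.
- by move=> x; rewrite band_lay_h.
- by move=> x; rewrite band_lay_h.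
- by move=> x /band_lay_down; apply.
- by move=> x /band_lay_up; apply.
- by move=> x /band_lay_down; apply.
- by move=> x /band_lay_up; apply.
- by move=> x L0; apply/negP => /(band_lay_eq L0) [].
- exact: m_outer.
- exact: m_inner.
- exact: m_ladder.
- exact: nK.
- by move=> x; apply: m_neq_n.
- exact: n_band.
Qed.

Definition band_state_at r u := band_state n (hshift r) (hshift (~~ r)) (vshift (~~ u))
  (rpar r) (band_lay u 0) (band_lay u 1).

Definition trail y := [exists u, band_lay u 2 y] || [exists r, exists u, band_state_at r u y].

Lemma ladder_trail u y : band_lay u 2 y -> trail (m y).
Proof.
move=> Ly; apply/orP; left; apply/existsP; exists (~~ u).
by rewrite (m_ladder Ly); apply: ladder_cross.
Qed.

Lemma trail_step y : trail y -> trail (m (n y)).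
Proof.
case/orP=> [/existsP [u Ly]|/existsP [r /existsP [u By]]].
  case: (n_band true u y) => ny.
  - by apply: (@ladder_trail u); rewrite ny band_lay_h.
  - by apply: (@ladder_trail u); rewrite ny band_lay_h.
  - apply/orP; right; apply/existsP; exists (~~ par y); apply/existsP; exists u.
    by apply: (band_entry (torus_band _ u) Ly _ ny); rewrite /rpar; case: (par y).
  - by case: (@m_neq_n y); rewrite ny (m_ladder Ly).
case: (band_step (torus_band r u) By) => [By'|/ladder_trail //].
by apply/orP; right; apply/existsP; exists r; apply/existsP; exists u.
Qed.

(* Since the cycle is connected, every M-edge has an end on the trail. *)
Lemma trail_cover x : trail x || trail (m x).
Proof.
have [x0 Lx0] : exists x0 : V, band_lay true 2 x0.
  have p_gt0 : 0 < p by apply: leq_trans p_ge6.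
  have q_gt2 : 2 < q by apply: leq_trans q_ge5.
  by exists (Ordinal p_gt0, Ordinal q_gt2); rewrite /band_lay layE.
have Tx0 : trail x0 by apply/orP; left; apply/existsP; exists true.
exact: (orbit_cover mK nK connected trail_step Tx0).
Qed.

Lemma trail_band u k y : band_lay u k y -> k < 2 -> trail y ->
  exists r u', [/\ band_state_at r u' y, band_lay u' k y & u' = u \/ k = 0 /\ q = 5].
Proof.
move=> Ly k_lt2 /orP [/existsP [u' L2]|/existsP [r /existsP [u' By]]].
  by case: (band_lay_eq Ly L2 (ltnW k_lt2) isT) => k2; rewrite k2 in k_lt2.
have [k' L' k'_lt2] : exists2 k', band_lay u' k' y & k' < 2.
  by case/orP: (band_state_layer (torus_band r u') By) => L'; [exists 1|exists 0].
have [kk' uu'] := band_lay_eq Ly L' (ltnW k_lt2) (ltnW k'_lt2).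
exists r, u'; rewrite kk'; split=> //.
by case: uu' => [->|[k0 q5]]; [left|right; rewrite -kk'].
Qed.

Lemma outer_vertical y : lay 0 y -> exists u : bool,
  [/\ u \/ q = 5, n y = vshift (~~ u) y & n (m y) = vshift (~~ u) (m y)].
Proof.
have outer_state y' : band_lay true 0 y' -> trail y' -> exists u : bool,
    [/\ u \/ q = 5, n y' = vshift (~~ u) y' & n (m y') = vshift (~~ u) (m y')].
  move=> Ly' /(trail_band Ly' isT) [r [u [By L0 uq]]].
  have [ny' nmy'] := band_state_outer (torus_band r u) By L0.
  by exists u; split=> //; case: uq => [->|[_ ->]]; auto.
move=> Ly; case/orP: (trail_cover y) => [Ty|Tmy]; first exact: outer_state.
have [u [uq nmy ny]] := outer_state (m y) (@m_band_lay true 0 y Ly isT) Tmy.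
by exists u; rewrite mK in ny; split.
Qed.

(* An N-edge leaving a ladder vertex x to the right starts at an odd row.
   Otherwise the even inner vertex w next to x, or its mate, is on the trail,
   and the invariant of the walk there forbids exactly this N-edge. *)
Lemma ladder_turn_parity u x : band_lay u 2 x -> n x = cR x -> par x.
Proof.
move=> Lx nx; apply/negPn/negP => Px.
pose w := vshift u x.
have Lw : band_lay u 1 w by apply: band_lay_up.
have Pw : ~~ par w by case: u @w {Lx Lw}.
have Dw : vshift (~~ u) w = x by apply: vshiftK.
have nRx : n (cR x) = x by apply: n_sym.
case/orP: (trail_cover w) => Tw.
  have [r [u' [Bw Lw' [uu'|[//]]]]] := trail_band Lw isT Tw; subst u'.
  have [] := band_state_inner (torus_band r u) Bw Lw'.
  case: r {Bw} => /= [Pw'|_ nD]; first by rewrite Pw' in Pw.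
  by apply: nD; rewrite -[cR w]/(hshift true w) hv_comm Dw /= nRx cRK.
have mw : m w = cR w by rewrite (m_inner true Lw) /rpar /= (negbTE Pw).
have LRw : band_lay u 1 (cR w) by rewrite -mw m_band_lay.
rewrite mw in Tw.
have [r [u' [Bw Lw' [uu'|[//]]]]] := trail_band LRw isT Tw; subst u'.
have [] := band_state_inner (torus_band r u) Bw Lw'.
case: r {Bw} => /= [_ nD|]; last by rewrite parR Pw.
by apply: nD; rewrite cRK Dw.
Qed.

Lemma outer_down y : lay 0 y -> n y = cD y -> n (m y) = cD (m y).
Proof.
move=> Ly ny; have [[] [_ ny' nmy]] := outer_vertical Ly => //.
by case: (@cUD_neq y); rewrite -ny ny'.
Qed.

Lemma outer_up y : lay 0 y -> n y = cU y -> q = 5 /\ n (m y) = cU (m y).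
Proof.
move=> Ly ny; have [[] [uq ny' nmy]] := outer_vertical Ly.
  by case: (@cUD_neq y); rewrite -ny ny'.
by case: uq.
Qed.

Lemma q_gt0 : 0 < q. Proof. exact: leq_trans q_ge5. Qed.

Definition top (x : V) : V := (x.1, Ordinal q_gt0).

Lemma top_lay x : lay 0 (top x). Proof. by rewrite /lay mod0n. Qed.

Lemma top_lay1 x : lay 1 x -> cU x = top x.
Proof.
rewrite layE // => /eqP x1; apply/eqP; rewrite xpair_eqE eqxx -val_eqE /=.
by rewrite x1 add1n /= modnn.
Qed.

Lemma top_lay3 x : q = 5 -> lay 3 x -> cD x = cU (top x).
Proof.
move=> q5; rewrite layE // => /eqP x3; apply/eqP; rewrite xpair_eqE eqxx -val_eqE /=.
by rewrite x3 add0n q5.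
Qed.

(* The part of the torus that the cycle cannot leave: layer 1, the vertices
   of layer 0 going down in N, and the ladder vertices whose row has its
   layer-0 vertex going up in N. *)
Definition upper_part v := [\/ lay 1 v, lay 0 v /\ n v = cD v
  | (exists u, band_lay u 2 v) /\ n (top v) = cU (top v)].

Lemma upper_part_m v : upper_part v -> upper_part (m v).
Proof.
case=> [L1|[L0 nv]|[[u L2] up]].
- by apply: Or31; apply: (@m_band_lay true 1).
- by apply: Or32; split; [apply: (@m_band_lay true 0)|apply: outer_down].
- by apply: Or33; rewrite (m_ladder L2); split; [exists (~~ u); apply: ladder_cross|case: u {L2}].
Qed.

Lemma lay1_down v : lay 1 v -> n v = cD v -> n (top v) = cU (top v).
Proof.
move=> L1 nv; rewrite -top_lay1 //.
have [[] [_ nU _]] := outer_vertical (@layU 0 _ L1) => //.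
by case: (@cUD_neq v); rewrite -nv; apply/esym/n_sym; rewrite nU /= cUK.
Qed.

Lemma upper_part_n v : upper_part v -> upper_part (n v).
Proof.
case=> [L1|[L0 nv]|[[u L2] up]].
- case: (n_shift v) => nv.
  + by apply: Or31; rewrite nv.
  + by apply: Or31; rewrite nv.
  + by apply: Or32; rewrite nv cUK; split; [apply: (@layU 0)|apply: n_sym].
  + apply: Or33; rewrite nv; split; first by exists true; apply: (@layD 1).
    exact: (lay1_down L1 nv).
- by apply: Or31; rewrite nv; apply: (@layD 0).
- have [q5 nmt] := outer_up (top_lay v) up.
  have mt : m (top v) = if par v then cR (top v) else cL (top v).
    by rewrite m_outer_lay ?top_lay.
  case: (n_band true u v) => nv.
  + apply: Or33; rewrite nv; split; first by exists u.
    by move: nmt; rewrite mt (ladder_turn_parity L2 nv).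
  + apply: Or33; rewrite nv; split; first by exists u.
    have: par (cL v) by apply: (@ladder_turn_parity u (cL v) L2); rewrite cLK; apply: n_sym.
    by rewrite parL => /negbTE Pv; move: nmt; rewrite mt Pv.
  + case: u L2 nv => L2 /= nv; first by apply: Or31; rewrite nv; apply: (@layU 1).
    have: n (cD v) = top v by rewrite (top_lay3 q5 L2); apply: n_sym.
    rewrite (n_sym nv) => vt; rewrite vt in L2.
    by case: (band_lay_eq (u' := true) (k' := 0) L2 (top_lay v) isT isT).
  + by case: (@m_neq_n v); rewrite nv (m_ladder L2).
Qed.

(* The contradiction: layer 4 lies outside the closed upper part. *)
Lemma no_completion : False.
Proof.
have p_gt0 : 0 < p by apply: leq_trans p_ge6.
have q_gt4 : 4 < q by [].
have q_gt1 : 1 < q by apply: leq_trans q_ge5.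
have L1 : upper_part (Ordinal p_gt0, Ordinal q_gt1) by apply: Or31; rewrite layE.
case: (connected upper_part_m upper_part_n (Ordinal p_gt0, Ordinal q_gt4) L1).
- by rewrite layE.
- by case; rewrite layE.
- by case=> [[[] L2 _]]; move: L2; rewrite /band_lay layE.
Qed.
End Completion.

Definition row_mate (s : bool) (x : V) : V := if par x == s then cR x else cL x.

Lemma row_mateK s : involutive (row_mate s).
Proof.
move=> x; rewrite /row_mate; have [<-|Px] := eqVneq (par x) s.
  by rewrite parR; case: (par x); rewrite /= cRK.
by move: Px; rewrite parL; case: (par x); case: s => //= _; rewrite cLK.
Qed.

Lemma row_mate_snd s x : (row_mate s x).2 = x.2.
Proof. by rewrite /row_mate; case: ifP. Qed.

Definition special_mate (x : V) : V :=
  if val x.2 == 2 then cD x else if val x.2 == 3 then cU x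
  else row_mate ((val x.2 == 0) || (val x.2 == 5 %% q)) x.

Lemma special_mateK : involutive special_mate.
Proof.
move=> x; rewrite /special_mate.
have [x2|x_neq2] := eqVneq (val x.2) 2.
  by rewrite /= x2 (@small_mod 3) //= cDK.
have [x3|x_neq3] := eqVneq (val x.2) 3.
  have Ux : val (cU x).2 = 2 by apply/eqP; rewrite -layE // (@layU 2) // layE // x3.
  by rewrite Ux cUK.
by rewrite !row_mate_snd (negbTE x_neq2) (negbTE x_neq3) row_mateK.
Qed.

Lemma adj_cR x : torus_adj p q x (cR x). Proof. by rewrite torus_adjE eqxx !orbT. Qed.
Lemma adj_cL x : torus_adj p q x (cL x). Proof. by rewrite torus_adjE cLK eqxx !orbT. Qed.
Lemma adj_cD x : torus_adj p q x (cD x). Proof. by rewrite torus_adjE eqxx. Qed.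
Lemma adj_cU x : torus_adj p q x (cU x). Proof. by rewrite torus_adjE cUK eqxx orbT. Qed.

Lemma special_mate_adj x : torus_adj p q x (special_mate x).
Proof.
rewrite /special_mate /row_mate; case: ifP => _; first exact: adj_cD.
case: ifP => _; first exact: adj_cU.
by case: ifP => _; [apply: adj_cR|apply: adj_cL].
Qed.

Lemma five_mod : 5 %% q = 5 \/ 5 %% q = 0.
Proof.
have [->|q_neq5] := eqVneq q 5; first by right; rewrite modnn.
by left; rewrite modn_small // ltn_neqAle eq_sym q_neq5.
Qed.

Lemma special_mate_right x :
  (par x && ((val x.2 == 0) || (val x.2 == 5 %% q))) ||
  (~~ par x && ((val x.2 == 1) || (val x.2 == 4))) -> special_mate x = cR x.
Proof.
rewrite /special_mate /row_mate.
by case/orP=> /andP [Px /orP [] /eqP ->]; rewrite ?Px ?(negbTE Px) //;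
  case: five_mod => ->.
Qed.

Lemma special_matching_exists :
  exists M, perfect_matching (torus_adj p q) M /\ special_matching_cond p q M.
Proof.
pose M0 := [set [set x; special_mate x] | x : V].
have M0_edge x : [set x; special_mate x] \in M0 by apply: imset_f.
exists M0; split; first exact: involution_perfect_matching special_mateK special_mate_adj.
split=> [a a' j a'E cond|a j j' j2 j3].
  have -> : (a', j) = special_mate (a, j).
    rewrite special_mate_right //; congr (_, _); apply: val_inj.
    by rewrite a'E /= addn1.
  exact: M0_edge.
have -> : (a, j') = special_mate (a, j).
  rewrite /special_mate j2 /=; congr (_, _); apply: val_inj.
  by rewrite /= j2 j3 small_mod.
exact: M0_edge.
Qed.
End Torus.

Theorem mainTheorem4 (p q : nat) :
  6 <= p -> ~~ odd p -> 5 <= q ->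
  (exists M, perfect_matching (torus_adj p q) M /\ special_matching_cond p q M) /\
  (forall M, perfect_matching (torus_adj p q) M -> special_matching_cond p q M ->
     ~ extendable_to_ham (torus_adj p q) M) /\
  ~ PMH_property (torus_adj p q).
Proof.
move=> p_ge6 p_even q_ge5.
have not_extendable M : perfect_matching (torus_adj p q) M ->
    special_matching_cond p q M -> ~ extendable_to_ham (torus_adj p q) M.
  move=> M_pm M_special [N [N_pm [c [c_ham MN_c]]]].
  exact: (no_completion p_ge6 p_even q_ge5 M_pm N_pm c_ham MN_c M_special).
have [M [M_pm M_special]] := special_matching_exists p_even q_ge5.
split; first by exists M.
split=> // [[_ every_pm_extendable]].
exact: (not_extendable M M_pm M_special (every_pm_extendable M M_pm)).
Qed.
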